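(* Let $k$ be a complex number and $n$ a positive integer. Then \[ \sum_{\pi \in \mathcal{D}(n)} (-1)^{\#(\pi)-1} s(\pi)^k = \sum_{\pi \in \mathcal{P}(n)} \sum_{j=0}^{\nu_d(\pi)} (-1)^j \binom{\nu_d(\pi)}{j} \bigl(\ell(\pi)-j\bigr)^k, \] where any term with $\ell(\pi)-j=0$ is interpreted as $0$.
   Context: $\mathcal{P}(n)$ is the set of all partitions of $n$ and $\mathcal{D}(n)$ the set of partitions of $n$ into distinct parts. For a partition $\pi$: $s(\pi)$ is its smallest part, $\ell(\pi)$ its largest part, $\#(\pi)$ its number of parts, and $\nu_d(\pi)$ the number of distinct part sizes of $\pi$. For a positive integer $m$ and complex $k$, $m^k=e^{k\log m}$ with the real logarithm. *)

From HB Require Import structures.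
From mathcomp Require Import all_boot all_order all_algebra.
From mathcomp Require Import all_classical all_reals all_analysis.
From mathcomp Require Import complex.
Set Implicit Arguments. Unset Strict Implicit. Unset Printing Implicit Defensive.
Import Order.TTheory GRing.Theory Num.Theory.
Local Open Scope ring_scope.

(* A partition of n is encoded by its multiplicity function:
   m : {ffun 'I_n -> 'I_n.+1}, where m i is the number of parts equal to i.+1
   (every part of a partition of n lies in 1..n and occurs at most n times). *)
Definition mult (n : nat) := {ffun 'I_n -> 'I_n.+1}.

Definition is_partition (n : nat) (m : mult n) : bool :=
  (\sum_(i < n) i.+1 * m i)%N == n.

Definition is_distinct (n : nat) (m : mult n) : bool :=
  [forall i, (m i <= 1)%N].

Definition nparts (n : nat) (m : mult n) : nat := (\sum_(i < n) m i)%N.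

Definition nu_d (n : nat) (m : mult n) : nat := #|[set i | (0 < m i)%N]|.

(* s(pi): smallest part (default n.+1 only for the empty partition, n = 0) *)
Definition spart (n : nat) (m : mult n) : nat :=
  \big[minn/n.+1]_(i < n | (0 < m i)%N) i.+1.

Definition lpart (n : nat) (m : mult n) : nat :=
  \max_(i < n | (0 < m i)%N) i.+1.

(* m^k = e^{k log m} for a positive integer m and complex k, real logarithm:
   e^{(a+ib) ln m} = e^{a ln m} (cos (b ln m) + i sin (b ln m)).
   The value at m = 0 is set to 0, following the paper's convention that
   terms with base 0 are interpreted as 0. *)
Definition cpow_nat (R : realType) (m : nat) (k : R[i]) : R[i] :=
  if m == 0%N then 0 else
  let L := ln (m%:R : R) in
  Complex (expR (complex.Re k * L) * cos (complex.Im k * L))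
          (expR (complex.Re k * L) * sin (complex.Im k * L)).

From HB Require Import structures.
From mathcomp Require Import all_boot all_order all_algebra.
From mathcomp Require Import all_classical all_reals all_analysis.
From mathcomp Require Import complex.
From mathcomp Require Import ring zify.
Import Order.TTheory GRing.Theory Num.Theory.
Local Open Scope ring_scope.
Set Implicit Arguments. Unset Strict Implicit. Unset Printing Implicit Defensive.

(* Both sides are linear in g(t) = t^k, which vanishes at 0, so it suffices to
   compare, for each a >= 1, the signed numbers of partitions of n that
   contribute g(a) on either side; these are the coefficients of q^n in two
   q-series.  Distinct partitions with smallest part a give
   q^a prod_(i > a) (1 - q^i) on the left.  On the right,
   sum_j (-1)^j C(nu, j) y^(l - j) = y^(l - nu) (y - 1)^nu factors over the
   part sizes up to l, so the partitions with largest part L contribute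
   q^L prod_(i < L) (y - q^i) / (q;q)_L, and a is read off as the exponent of y
   in the sum S(y) of these terms.  Now S(y) (1 - q y) = S(q y) and S(1) = 1,
   so the y^a-coefficients of S satisfy (1 - q^(a+1)) c_(a+1) = q c_a and sum
   to 1; the left-hand series satisfy the same recurrence and also sum to 1,
   hence they coincide.  All series are truncated modulo q^(n+1). *)

Section TruncatedEquality.
Variables (R : nzRingType) (N : nat).

Definition eq_upto (p q : {poly R}) := forall k, (k <= N)%N -> p`_k = q`_k.

Definition eq_upto2 (P Q : {poly {poly R}}) := forall a, eq_upto P`_a Q`_a.

Lemma eq_upto_eq p q : p = q -> eq_upto p q. Proof. by move->. Qed.

Lemma eq_upto_sym p q : eq_upto p q -> eq_upto q p.
Proof. by move=> e k hk; rewrite e. Qed.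

Lemma eq_upto_trans p q r : eq_upto p q -> eq_upto q r -> eq_upto p r.
Proof. by move=> e1 e2 k hk; rewrite e1 // e2. Qed.

Lemma eq_uptoD p q p' q' :
  eq_upto p p' -> eq_upto q q' -> eq_upto (p + q) (p' + q').
Proof. by move=> e1 e2 k hk; rewrite !coefD e1 // e2. Qed.

Lemma eq_uptoN p p' : eq_upto p p' -> eq_upto (- p) (- p').
Proof. by move=> e k hk; rewrite !coefN e. Qed.

Lemma eq_uptoM p q p' q' :
  eq_upto p p' -> eq_upto q q' -> eq_upto (p * q) (p' * q').
Proof.
move=> e1 e2 k hk; rewrite !coefM; apply: eq_bigr => j _.
by rewrite e1 ?e2 // (leq_trans _ hk) // ?leq_subr // -ltnS.
Qed.

Lemma eq_upto_sum I (r : seq I) (P : pred I) (F G : I -> {poly R}) :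
  (forall i, P i -> eq_upto (F i) (G i)) ->
  eq_upto (\sum_(i <- r | P i) F i) (\sum_(i <- r | P i) G i).
Proof. by move=> e; apply: (big_ind2 eq_upto) => // *; apply: eq_uptoD. Qed.

Lemma eq_upto_XnM m p : (N < m)%N -> eq_upto ('X^m * p) 0.
Proof. by move=> hm k hk; rewrite coefXnM coef0 (leq_ltn_trans hk hm). Qed.

(* [U] is invertible modulo [X^N.+1]: look at the lowest coefficient of [p]. *)
Lemma eq_upto_mulIr (p U : {poly R}) :
  U`_0 = 1 -> eq_upto (p * U) 0 -> eq_upto p 0.
Proof.
move=> U0 e; suff low j : (j <= N)%N -> forall i, (i <= j)%N -> p`_i = 0.
  by move=> k hk; rewrite coef0 (low k hk).
elim: j => [h0|j IH hj] i.
  rewrite leqn0 => /eqP->; move: (e 0%N h0).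
  by rewrite coefM big_ord1 U0 mulr1 coef0.
rewrite leq_eqVlt ltnS => /orP[/eqP->|]; last exact/IH/ltnW.
move: (e j.+1 hj); rewrite coefM big_ord_recr /= subnn U0 mulr1 coef0 big1 ?add0r //.
by move=> i' _; rewrite IH ?mul0r ?(ltnW hj) // -ltnS.
Qed.

Lemma eq_upto2_eq P Q : P = Q -> eq_upto2 P Q. Proof. by move->. Qed.

Lemma eq_upto2_trans P Q S : eq_upto2 P Q -> eq_upto2 Q S -> eq_upto2 P S.
Proof. by move=> e1 e2 a; apply: eq_upto_trans (e1 a) (e2 a). Qed.

Lemma eq_upto2D P Q P' Q' :
  eq_upto2 P P' -> eq_upto2 Q Q' -> eq_upto2 (P + Q) (P' + Q').
Proof. by move=> e1 e2 a; rewrite !coefD; apply: eq_uptoD. Qed.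

Lemma eq_upto2N P P' : eq_upto2 P P' -> eq_upto2 (- P) (- P').
Proof. by move=> e a; rewrite !coefN; apply: eq_uptoN. Qed.

Lemma eq_upto2M P Q P' Q' :
  eq_upto2 P P' -> eq_upto2 Q Q' -> eq_upto2 (P * Q) (P' * Q').
Proof. by move=> e1 e2 a; rewrite !coefM; apply: eq_upto_sum => j _; apply: eq_uptoM. Qed.

Lemma eq_upto2_sum I (r : seq I) (P : pred I) (F G : I -> {poly {poly R}}) :
  (forall i, P i -> eq_upto2 (F i) (G i)) ->
  eq_upto2 (\sum_(i <- r | P i) F i) (\sum_(i <- r | P i) G i).
Proof. by move=> e; apply: (big_ind2 eq_upto2) => // *; apply: eq_upto2D. Qed.

Lemma eq_upto2_prod I (r : seq I) (P : pred I) (F G : I -> {poly {poly R}}) :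
  (forall i, P i -> eq_upto2 (F i) (G i)) ->
  eq_upto2 (\prod_(i <- r | P i) F i) (\prod_(i <- r | P i) G i).
Proof. by move=> e; apply: (big_ind2 eq_upto2) => // *; apply: eq_upto2M. Qed.

Lemma eq_upto2C c c' : eq_upto c c' -> eq_upto2 c%:P c'%:P.
Proof. by move=> e a; rewrite !coefC; case: eqP. Qed.

Lemma eq_upto2_CXnM m c P : (N < m)%N -> eq_upto2 (('X^m * c)%:P * P) 0.
Proof.
by move=> hm a; rewrite coefCM coef0 -mulrA; apply: eq_upto_XnM.
Qed.

End TruncatedEquality.

Lemma coef_comp_polyCX (R : comNzRingType) (c : R) (P : {poly R}) a :
  (P \Po (c%:P * 'X))`_a = P`_a * c ^+ a.
Proof.
rewrite coef_comp_poly; case: (ltnP a (size P)) => ha; last first.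
  rewrite nth_default // mul0r big1 // => i _.
  by rewrite exprMn -polyC_exp coefCM coefXn gtn_eqF ?mulr0 // (leq_trans _ ha).
rewrite (bigD1 (Ordinal ha)) //= big1 ?addr0 => [|i /eqP hi].
  by rewrite exprMn -polyC_exp coefCM coefXn eqxx mulr1.
rewrite exprMn -polyC_exp coefCM coefXn; case: eqP => [ai|]; last by rewrite !mulr0.
by case: hi; apply: val_inj.
Qed.

Section QSeries.
Variables (R : comNzRingType) (N : nat).
Local Notation q := ('X : {poly R}).
Local Notation y := ('X : {poly {poly R}}).
Local Notation eq_upto := (eq_upto N).
Local Notation eq_upto2 := (eq_upto2 N).

(* [geom i] and [qfactinv L] truncate 1/(1 - q^i) and 1/(q;q)_L. *)
Definition geom i : {poly R} := \sum_(t < N.+1) q ^+ (i * t).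

Lemma geomK i : (0 < i)%N -> eq_upto ((1 - q ^+ i) * geom i) 1.
Proof.
move=> i0; have -> : (1 - q ^+ i) * geom i = 1 ^+ N.+1 - (q ^+ i) ^+ N.+1.
  rewrite subrXX; congr (_ * _).
  by apply: eq_bigr => t _; rewrite expr1n mul1r exprM.
rewrite expr1n -exprM.
apply: (@eq_upto_trans _ _ _ (1 - 0)); last by rewrite subr0.
apply/eq_uptoD/eq_uptoN => //; rewrite -[_ ^+ _]mulr1.
by apply: eq_upto_XnM; rewrite (leq_trans _ (leq_pmull _ i0)).
Qed.

Definition qfactinv L : {poly R} := \prod_(i < L) geom i.+1.

Definition ypoch L : {poly {poly R}} := \prod_(i < L) (y - (q ^+ i)%:P).

Definition gterm L : {poly {poly R}} := (q ^+ L * qfactinv L)%:P * ypoch L.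

Definition gsum : {poly {poly R}} := \sum_(L < N.+1) gterm L.

Local Notation qy := (q%:P * y).

Lemma ypoch_qy L : ypoch L.+1 \Po qy = (qy - 1) * (q ^+ L)%:P * ypoch L.
Proof.
rewrite /ypoch rmorph_prod big_ord_recl /= -mulrA; congr (_ * _).
  by rewrite rmorphB /= comp_polyX comp_polyC expr0.
rewrite polyC_exp (_ : q%:P ^+ L = \prod_(i < L) q%:P); last first.
  by rewrite prodr_const card_ord.
rewrite -big_split /=; apply: eq_bigr => i _.
by rewrite rmorphB /= comp_polyX comp_polyC /bump add1n exprS polyCM; ring.
Qed.

Lemma gterm_last : eq_upto2 (gterm N * qy) 0.
Proof.
have -> : gterm N * qy = (q ^+ N.+1 * qfactinv N)%:P * (ypoch N * y).
  by rewrite /gterm !polyCM !polyC_exp exprS; ring.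
exact: eq_upto2_CXnM.
Qed.

Lemma gterm_step L :
  eq_upto2 (gterm L.+1 - gterm L * qy) (gterm L.+1 \Po qy).
Proof.
have e : eq_upto (q ^+ L * qfactinv L)
    (q ^+ L * qfactinv L * ((1 - q ^+ L.+1) * geom L.+1)).
  by rewrite -[X in eq_upto X]mulr1; apply/eq_uptoM/eq_upto_sym/geomK.
apply: (@eq_upto2_trans _ _ _
  (gterm L.+1 - (q ^+ L * qfactinv L * ((1 - q ^+ L.+1) * geom L.+1))%:P
                 * ypoch L * qy)).
  apply: eq_upto2D => //; apply/eq_upto2N/eq_upto2M => //.
  by apply: eq_upto2M => //; apply: eq_upto2C.
rewrite /gterm comp_polyM comp_polyC ypoch_qy /qfactinv /ypoch.
rewrite !big_ord_recr /= !polyCM !polyCB !polyC_exp.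
rewrite polyC1 !exprS; apply: eq_upto2_eq; ring.
Qed.

Lemma gterm0 : gterm 0 = 1.
Proof. by rewrite /gterm /qfactinv /ypoch !big_ord0 expr0 !mulr1. Qed.

Lemma gsum_qy : eq_upto2 (gsum * (1 - qy)) (gsum \Po qy).
Proof.
have -> : gsum * (1 - qy) =
    gterm 0 + \sum_(L < N) (gterm L.+1 - gterm L * qy) - gterm N * qy.
  rewrite /gsum sumrB mulrBr mulr1 big_distrl /= big_ord_recl.
  rewrite [X in _ - X]big_ord_recr /=; ring.
rewrite /gsum rmorph_sum big_ord_recl /= gterm0 rmorph1 -[X in eq_upto2 _ X]subr0.
apply/eq_upto2D/eq_upto2N/gterm_last.
by apply: eq_upto2D => //; apply: eq_upto2_sum => L _; apply: gterm_step.
Qed.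

Lemma coef_gsum_rec a :
  eq_upto ((1 - q ^+ a.+1) * gsum`_a.+1) (q * gsum`_a).
Proof.
have := gsum_qy a.+1.
rewrite coef_comp_polyCX mulrBr mulr1 coefB mulrA coefMX coefMC /= => e.
have -> : (1 - q ^+ a.+1) * gsum`_a.+1 =
    gsum`_a.+1 - gsum`_a * q - gsum`_a.+1 * q ^+ a.+1 + q * gsum`_a by ring.
apply: (@eq_upto_trans _ _ _
  (gsum`_a.+1 * q ^+ a.+1 - gsum`_a.+1 * q ^+ a.+1 + q * gsum`_a)).
  by apply: eq_uptoD => //; apply: eq_uptoD.
by rewrite subrr add0r.
Qed.

Definition qweight a : {poly R} := q ^+ a * qfactinv a.

Lemma eq_upto_qrec (f : nat -> {poly R}) M :
  (forall a, (a < M)%N -> eq_upto ((1 - q ^+ a.+1) * f a.+1) (q * f a)) ->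
  forall a, (a <= M)%N -> eq_upto (f a) (f 0%N * qweight a).
Proof.
move=> rec; elim=> [_|a IH ha].
  by rewrite /qweight /qfactinv big_ord0 expr0 !mulr1.
apply: (@eq_upto_trans _ _ _ (geom a.+1 * ((1 - q ^+ a.+1) * f a.+1))).
  rewrite mulrA -[X in eq_upto X _]mul1r; apply: eq_uptoM; last exact: eq_upto_eq.
  by rewrite mulrC; apply/eq_upto_sym/geomK.
apply: (@eq_upto_trans _ _ _ (geom a.+1 * (q * (f 0%N * qweight a)))).
  apply: eq_uptoM; first exact: eq_upto_eq.
  apply: eq_upto_trans (rec a ha) _; apply: eq_uptoM; first exact: eq_upto_eq.
  exact/IH/ltnW.
by apply: eq_upto_eq; rewrite /qweight /qfactinv big_ord_recr /= exprS; ring.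
Qed.

Definition qtail a : {poly R} := q ^+ a * \prod_(a <= i < N) (1 - q ^+ i.+1).

Lemma qtail_rec a : (a < N)%N -> (1 - q ^+ a.+1) * qtail a.+1 = q * qtail a.
Proof.
by move=> ha; rewrite /qtail [in RHS]big_ltn // exprS; set P := \prod_(_ <= _ < _) _; ring.
Qed.

Lemma sum_qtail : \sum_(a < N.+1) qtail a = 1.
Proof.
suff part K : (K <= N)%N ->
    \sum_(a < K.+1) qtail a = \prod_(K <= i < N) (1 - q ^+ i.+1).
  by rewrite part ?big_geq.
elim: K => [_|K IH hK]; first by rewrite big_ord1 /qtail expr0 mul1r.
rewrite big_ord_recr /= IH; last exact: ltnW.
by rewrite big_ltn // /qtail; set P := \prod_(_ <= _ < _) _; ring.
Qed.

Lemma size_gsum : (size gsum <= N.+1)%N.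
Proof.
rewrite (leq_trans (size_sum _ _ _)) //; apply/bigmax_leqP => L _.
rewrite /gterm mul_polyC (leq_trans (size_scale_leq _ _)) // /ypoch.
by rewrite -(big_mkord xpredT (fun i => y - (q ^+ i)%:P)) size_prod_XsubC size_iota subn0.
Qed.

Lemma sum_coef_gsum : \sum_(a < N.+1) gsum`_a = 1.
Proof.
have -> : \sum_(a < N.+1) gsum`_a = gsum.[1].
  by rewrite (horner_coef_wide _ size_gsum); apply: eq_bigr => a _; rewrite expr1n mulr1.
rewrite /gsum horner_sum big_ord_recl /= gterm0 hornerC big1 ?addr0 // => L _.
by rewrite /gterm hornerCM /ypoch big_ord_recl expr0 hornerM hornerXsubC subrr mul0r mulr0.
Qed.

Lemma coef_gsum a : (a <= N)%N -> eq_upto gsum`_a (qtail a).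
Proof.
pose U := \sum_(b < N.+1) qweight b.
have U0 : U`_0 = 1.
  rewrite coef_sum big_ord_recl big1 /= ?addr0 => [|b _]; last by rewrite /qweight coefXnM.
  by rewrite /qweight /qfactinv big_ord0 expr0 mulr1 coefC.
have qtail_sol b : (b <= N)%N -> eq_upto (qtail b) (qtail 0%N * qweight b).
  by apply: eq_upto_qrec => c hc; rewrite qtail_rec.
have gsum_sol b : eq_upto gsum`_b (gsum`_0 * qweight b).
  by apply: (@eq_upto_qrec (fun b => gsum`_b) b) => // c _; apply: coef_gsum_rec.
have first_eq : eq_upto gsum`_0 (qtail 0%N).
  suff : eq_upto ((gsum`_0 - qtail 0%N) * U) 0.
    by move/eq_upto_mulIr => /(_ U0) e k hk; apply/eqP; rewrite -subr_eq0 -coefB e ?coef0.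
  rewrite mulrBl !mulr_sumr; apply: (@eq_upto_trans _ _ _ (1 - 1)); last by rewrite subrr.
  apply: eq_uptoD.
    by rewrite -sum_coef_gsum; apply: eq_upto_sum => b _; apply: eq_upto_sym.
  apply: eq_uptoN; rewrite -sum_qtail; apply: eq_upto_sum => b _.
  by apply/eq_upto_sym/qtail_sol; rewrite -ltnS.
move=> ha; apply: eq_upto_trans (gsum_sol a) _; apply: eq_upto_sym.
by apply: eq_upto_trans (qtail_sol a ha) _; apply: eq_uptoM => //; apply: eq_upto_sym.
Qed.

End QSeries.

Section PartitionStatistics.
Variable n : nat.
Implicit Types m : mult n.

Definition psize m : nat := \sum_(i < n) i.+1 * m i.

Lemma spart_attained m :
  (spart m <= n)%N -> exists2 i, (0 < m i)%N & spart m = i.+1.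
Proof.
case: (pickP (fun i => 0 < m i)%N) => [j mj _|none].
  rewrite /spart (bigmin_eq_arg n.+1 j) //; last by move=> i _; exact: ltnW (ltn_ord i).
  by case: arg_minP => // i mi _; exists i.
by rewrite /spart big_pred0 // ltnn.
Qed.

Lemma lpart_attained m :
  (0 < lpart m)%N -> exists2 i, (0 < m i)%N & lpart m = i.+1.
Proof.
case: (pickP (fun i => 0 < m i)%N) => [j mj _|none].
  rewrite /lpart (bigop.bigmax_eq_arg j) //.
  by case: arg_maxnP => // i mi _; exists i.
by rewrite /lpart big_pred0.
Qed.

Lemma lpart_le m : (lpart m <= n)%N.
Proof. by apply/bigmax_leqP => i _; apply: ltn_ord. Qed.

Lemma lt_lpart m i : (0 < m i)%N -> (i < lpart m)%N.
Proof. exact: leq_bigmax_cond. Qed.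

Lemma spart_le m : is_partition m -> (0 < n)%N -> (spart m <= n)%N.
Proof.
move=> pm n0; case: (pickP (fun i => 0 < m i)%N) => [i mi|none].
  exact: leq_trans (bigmin_le_cond n.+1 _ mi) (ltn_ord i).
move: pm; rewrite /is_partition big1 => [|i _]; first by rewrite eq_sym gtn_eqF.
by move: (none i) => /negbT; rewrite -eqn0Ngt => /eqP->; rewrite muln0.
Qed.

End PartitionStatistics.

Section SmallestPartSeries.
Variables (n a : nat).
Hypotheses (a_gt0 : (0 < a)%N) (a_le : (a <= n)%N).
Implicit Types m : mult n.

Definition fits_min (i : 'I_n) (t : nat) : bool :=
  (t <= 1)%N && (if (i.+1 < a)%N then t == 0%N else if i.+1 == a then t == 1%N else true).

Lemma fits_minP m : [forall i, fits_min i (m i)] = is_distinct m && (spart m == a).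
Proof.
have ha : (a.-1 < n)%N by rewrite prednK.
pose i0 := Ordinal ha; have i0a : i0.+1 = a by rewrite prednK.
apply/forallP/andP => [fit|[dist /eqP sa]].
  have m_le1 i : (m i <= 1)%N by case/andP: (fit i).
  have mi0 : m i0 = 1%N :> nat.
    by move: (fit i0); rewrite /fits_min i0a ltnn eqxx => /andP[_ /eqP].
  split; first by apply/forallP.
  rewrite eqn_leq; apply/andP; split.
    by rewrite -i0a; apply: (bigmin_le_cond n.+1 _ (_ : 0 < m i0)%N); rewrite mi0.
  apply/(bigmin_geP n.+1); split=> [|i mi]; first exact: leqW.
  rewrite leEnat leqNgt; apply/negP => lt_ia; move: (fit i); rewrite /fits_min lt_ia.
  by rewrite lt0n in mi; rewrite (negbTE mi) andbF.
have [j mj sj] := spart_attained (leq_trans (eq_leq sa) a_le).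
have ge_a i : (0 < m i)%N -> (a <= i.+1)%N.
  by rewrite -sa => mi; exact: (bigmin_le_cond n.+1 _ mi).
move=> i; rewrite /fits_min (forallP dist i) /=.
case: ltnP => [lt_ia|_].
  by rewrite eqn0Ngt; apply/negP => /ge_a; rewrite leqNgt lt_ia.
case: eqP => // ia; have -> : i = j by apply: val_inj; apply: succn_inj; rewrite ia -sj sa.
by rewrite eqn_leq (forallP dist j) mj.
Qed.

Definition min_factor (i : 'I_n) (t : nat) : {poly int} :=
  (fits_min i t)%:R * (- 'X^(i.+1)) ^+ t.

Lemma prod_min_factor m : \prod_i min_factor i (m i) =
  [forall i, fits_min i (m i)]%:R * ((-1) ^+ nparts m * 'X^(psize m)).
Proof.
case: forallP => [fit|/forallP]; last first.
  rewrite negb_forall => /existsP[i /negbTE fi].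
  by rewrite (bigD1 i) //= /min_factor fi !mul0r.
rewrite mul1r /nparts /psize !expr_sum -big_split /=; apply: eq_bigr => i _.
by rewrite /min_factor fit mul1r [LHS]exprNn exprM.
Qed.

Definition min_factor_sum (i : nat) : {poly int} :=
  if (i.+1 < a)%N then 1 else if i.+1 == a then - 'X^a else 1 - 'X^(i.+1).

Lemma sum_min_factor i : \sum_(t < n.+1) min_factor i t = min_factor_sum i.
Proof.
rewrite (bigID (fun t : 'I_n.+1 => t < 2)%N) /= [X in _ + X]big1 => [|t]; last first.
  by rewrite -leqNgt /min_factor /fits_min => lt1t; rewrite leqNgt lt1t mul0r.
have n_gt0 : (0 < n)%N by apply: leq_trans a_le.
rewrite addr0 -(big_ord_widen n.+1 (min_factor i) (_ : 2 <= n.+1)%N) //.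
rewrite !big_ord_recl big_ord0 /min_factor /fits_min /min_factor_sum /= expr0 expr1 addr0.
case: ltnP => _; first by rewrite mul1r mul0r addr0.
by case: eqP => [->|]; rewrite ?mul1r ?mul0r ?add0r // addrC.
Qed.

Lemma prod_sum_min_factor :
  \prod_(i < n) \sum_(t < n.+1) min_factor i t = - qtail int n a.
Proof.
rewrite (eq_bigr _ (fun i _ => sum_min_factor i)) -(big_mkord xpredT min_factor_sum).
rewrite (@big_cat_nat _ _ _ a.-1) ?(leq_trans (leq_pred a)) //=.
rewrite big_nat_cond big1 ?mul1r => [|i /andP[/andP[_ hi] _]]; last first.
  by rewrite /min_factor_sum -ltn_predRL hi.
rewrite big_ltn ?prednK // /min_factor_sum prednK // ltnn eqxx mulNr.
congr (- (_ * _)).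
apply: eq_big_nat => i /andP[ai _].
by rewrite ltnNge (leqW ai) /= gtn_eqF.
Qed.

Lemma distinct_spart_gf :
  \sum_(m : mult n | is_distinct m && (spart m == a))
     (-1) ^+ (nparts m).-1 * 'X^(psize m) = qtail int n a.
Proof.
rewrite -[RHS]opprK -prod_sum_min_factor bigA_distr_bigA /= -sumrN big_mkcond /=.
apply: eq_bigr => m _; rewrite prod_min_factor fits_minP.
case: ifP => [/andP[_ /eqP sa]|_]; last by rewrite mul0r oppr0.
have [j mj _] := spart_attained (leq_trans (eq_leq sa) a_le).
have : (0 < nparts m)%N by rewrite /nparts (bigD1 j) //= addn_gt0 mj.
by case: (nparts m) => // k _; rewrite mul1r exprS mulN1r mulNr opprK.
Qed.

End SmallestPartSeries.

Section LargestPartSeries.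
Variable n : nat.
Implicit Types m : mult n.
Local Notation q := ('X : {poly int}).
Local Notation y := ('X : {poly {poly int}}).

Definition binom_weight m : {poly {poly int}} :=
  \sum_(j < (nu_d m).+1) ((-1) ^+ j * ('C(nu_d m, j))%:R : int)%:P%:P * y ^+ (lpart m - j).

Definition gap_weight m : {poly {poly int}} :=
  \prod_(i < n) (if (i < lpart m)%N then (if (0 < m i)%N then y - 1 else y) else 1).

Lemma card_ord_lt L : (L <= n)%N -> #|[pred i : 'I_n | (i < L)%N]| = L.
Proof.
move=> Ln; rewrite -sum1_card -(big_ord_widen n (fun _ => 1%N) Ln).
by rewrite sum1_card card_ord.
Qed.

Lemma card_lpart_support m :
  #|[pred i : 'I_n | (i < lpart m)%N && (0 < m i)%N]| = nu_d m.
Proof.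
rewrite /nu_d; apply: eq_card => i; rewrite !inE /=.
by case mi: (0 < m i)%N; rewrite ?andbF // lt_lpart ?mi.
Qed.

Lemma card_lpart_gaps m :
  #|[pred i : 'I_n | (i < lpart m)%N && ~~ (0 < m i)%N]| = (lpart m - nu_d m)%N.
Proof.
have := cardID [pred i : 'I_n | (0 < m i)%N] [pred i : 'I_n | (i < lpart m)%N].
rewrite card_ord_lt ?lpart_le //; set I := #|predI _ _|; set D := #|predD _ _|.
have -> : I = nu_d m by rewrite -card_lpart_support; apply: eq_card => i; rewrite !inE.
move=> e; suff -> : #|[pred i : 'I_n | (i < lpart m)%N && ~~ (0 < m i)%N]| = D by lia.
by apply: eq_card => i; rewrite !inE andbC.
Qed.

Lemma nu_d_le_lpart m : (nu_d m <= lpart m)%N.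
Proof.
rewrite -card_lpart_support -[X in (_ <= X)%N](card_ord_lt (lpart_le m)).
by apply: subset_leq_card; apply/fintype.subsetP => i; rewrite !inE => /andP[].
Qed.

(* [binom_weight m] is [y^(l - nu) (y - 1)^nu]: one factor [y - 1] for each part
   size up to [l] that occurs, one factor [y] for each that does not. *)
Lemma binom_weightE m : binom_weight m = gap_weight m.
Proof.
rewrite /gap_weight -big_mkcond /= (bigID (fun i : 'I_n => 0 < m i)%N) /=.
rewrite (eq_bigr (fun=> y - 1)) => [|i /andP[_ ->]] //.
rewrite [X in _ * X](eq_bigr (fun=> y)) => [|i /andP[_ /negbTE->]] //.
rewrite !prodr_const card_lpart_support card_lpart_gaps exprBn mulr_suml.
apply: eq_bigr => j _; have jn : (j <= nu_d m)%N by rewrite -ltnS.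
have -> : (lpart m - j = (nu_d m - j) + (lpart m - nu_d m))%N.
  by have := nu_d_le_lpart m; lia.
rewrite exprD expr1n mulr1 !rmorphM !rmorphXn !rmorphN !rmorph1 !rmorph_nat.
by rewrite -mulr_natr; ring.
Qed.

Definition lpart_factor L (i : 'I_n) (t : nat) : {poly {poly int}} :=
  (q ^+ (i.+1 * t))%:P *
  (if (i.+1 < L)%N then (if (0 < t)%N then y - 1 else y)
   else if i.+1 == L then (if (0 < t)%N then y - 1 else 0) else (t == 0%N)%:R).

Lemma lpart_factor_eq0 L m : (L <= n)%N -> lpart m != L ->
  exists i, lpart_factor L i (m i) = 0.
Proof.
move=> Ln /eqP lL; case: (ltngtP L (lpart m)) => [lt_Ll|lt_lL|/esym/lL[]].
  have [|j mj lj] := lpart_attained (m := m); first exact: leq_ltn_trans lt_Ll.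
  exists j; rewrite /lpart_factor -lj ltnNge (ltnW lt_Ll) gtn_eqF //.
  by rewrite eqn0Ngt mj mulr0.
case: L Ln lL lt_lL => // L Ln _ lt_lL; exists (Ordinal Ln).
rewrite /lpart_factor /= ltnn eqxx.
suff -> : (0 < m (Ordinal Ln))%N = false by rewrite mulr0.
by apply/negbTE/negP => /lt_lpart; rewrite ltnNge -ltnS lt_lL.
Qed.

Lemma prod_lpart_factor L m : (L <= n)%N ->
  \prod_i lpart_factor L i (m i) =
  (lpart m == L)%:R * ((q ^+ psize m)%:P * gap_weight m).
Proof.
move=> Ln; rewrite /gap_weight /psize expr_sum rmorph_prod -big_split /=.
case: eqP => [<-|/eqP lL]; last first.
  by have [i fi0] := lpart_factor_eq0 Ln lL; rewrite (bigD1 i) //= fi0 !mul0r.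
rewrite mul1r; apply: eq_bigr => i _; rewrite /lpart_factor; congr (_ * _).
case: ltnP => [/ltnW->//|]; rewrite leq_eqVlt => /orP[/eqP li|lt_li].
  have [|j mj lj] := lpart_attained (m := m); first by rewrite li.
  have -> : i = j by apply: val_inj; apply: succn_inj; rewrite -li lj.
  by rewrite lj eqxx mj ltnSn.
have mi0 : m i = 0%N :> nat.
  apply/eqP; rewrite -leqn0 leqNgt; apply/negP => /lt_lpart.
  by rewrite ltnNge -ltnS lt_li.
by rewrite mi0 gtn_eqF // ltnNge -ltnS lt_li.
Qed.

Definition lpart_factor_sum L (i : nat) : {poly {poly int}} :=
  if (i.+1 < L)%N then y + (y - 1) * (geom int n i.+1 - 1)%:P
  else if i.+1 == L then (y - 1) * (geom int n i.+1 - 1)%:P else 1.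

Lemma sum_lpart_factor L (i : 'I_n) :
  \sum_(t < n.+1) lpart_factor L i t = lpart_factor_sum L i.
Proof.
have geom_pred : geom int n i.+1 - 1 = \sum_(t < n) q ^+ (i.+1 * t.+1).
  by rewrite /geom big_ord_recl muln0 expr0 addrAC subrr add0r.
rewrite big_ord_recl /lpart_factor_sum geom_pred rmorph_sum big_distrr /=.
rewrite /lpart_factor muln0 expr0 polyC1 !mul1r /=.
case: ltnP => _; first by congr (_ + _); apply: eq_bigr => t _; rewrite mulrC.
case: eqP => _; first by rewrite add0r; apply: eq_bigr => t _; rewrite mulrC.
by rewrite big1 ?addr0 // => t _; rewrite mulr0.
Qed.

Definition binom_gf : {poly {poly int}} :=
  \sum_(m : mult n) (q ^+ psize m)%:P * binom_weight m.

Lemma binom_gfE : binom_gf = \sum_(L < n.+1) \prod_(i < n) lpart_factor_sum L i.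
Proof.
have by_lpart m : (q ^+ psize m)%:P * binom_weight m =
    \sum_(L < n.+1) (lpart m == L)%:R * ((q ^+ psize m)%:P * gap_weight m).
  have lm : (lpart m < n.+1)%N by rewrite ltnS lpart_le.
  rewrite -big_distrl /= (bigD1 (Ordinal lm)) //=.
  rewrite eqxx big1 ?addr0 ?mul1r ?binom_weightE // => L /eqP lL.
  by case: eqP => // eL; case: lL; apply: val_inj.
rewrite /binom_gf (eq_bigr _ (fun m _ => by_lpart m)) exchange_big /=.
apply: eq_bigr => L _; rewrite -(eq_bigr _ (fun m _ => prod_lpart_factor m (ltn_ord L))).
by rewrite -(eq_bigr _ (fun i _ => sum_lpart_factor L i)) bigA_distr_bigA.
Qed.

Lemma one_sub_geomK k : (0 < k)%N -> eq_upto n (1 - (1 - q ^+ k) * geom int n k) 0.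
Proof.
move=> k0; apply: (@eq_upto_trans _ _ _ (1 - 1)); last by rewrite subrr.
by apply: eq_uptoD => //; apply/eq_uptoN/geomK.
Qed.

Lemma lpart_factor_sum_lt L i : (i.+1 < L)%N ->
  eq_upto2 n (lpart_factor_sum L i) ((geom int n i.+1)%:P * (y - (q ^+ i.+1)%:P)).
Proof.
move=> iL; rewrite /lpart_factor_sum iL.
rewrite -[X in eq_upto2 _ _ X]addr0; set g := geom int n i.+1.
have -> : y + (y - 1) * (g - 1)%:P =
    g%:P * (y - (q ^+ i.+1)%:P) + (1 - (1 - q ^+ i.+1) * g)%:P.
  by rewrite !rmorphB !rmorphM !rmorphB !rmorph1; ring.
by apply: eq_upto2D => //; apply/eq_upto2C/one_sub_geomK.
Qed.

Lemma lpart_factor_sum_eq L :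
  eq_upto2 n (lpart_factor_sum L.+1 L) ((q ^+ L.+1 * geom int n L.+1)%:P * (y - 1)).
Proof.
rewrite /lpart_factor_sum ltnn eqxx -[X in eq_upto2 _ _ X]subr0.
set g := geom int n L.+1.
have -> : (y - 1) * (g - 1)%:P =
    (q ^+ L.+1 * g)%:P * (y - 1) - (y - 1) * (1 - (1 - q ^+ L.+1) * g)%:P.
  by rewrite !rmorphB !rmorphM !rmorphB !rmorph1; ring.
apply: eq_upto2D => //; apply: eq_upto2N; rewrite -[X in eq_upto2 _ _ X](mulr0 (y - 1)).
by apply: eq_upto2M => //; apply/eq_upto2C/one_sub_geomK.
Qed.

Lemma prod_lpart_factor_sum L : (L <= n)%N ->
  eq_upto2 n (\prod_(i < n) lpart_factor_sum L i) (gterm int n L).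
Proof.
case: L => [_|L Ln].
  by rewrite gterm0 big1 // => i _; rewrite /lpart_factor_sum.
rewrite -(big_mkord xpredT (lpart_factor_sum L.+1)) (@big_cat_nat _ _ _ L) ?(ltnW Ln) //=.
rewrite [X in _ * X]big_ltn // [X in _ * (_ * X)]big_nat_cond.
rewrite [X in _ * (_ * X)]big1; last first.
  by move=> i /andP[/andP[Li _] _]; rewrite /lpart_factor_sum ltnNge ltnW //= gtn_eqF.
rewrite mulr1 big_nat_cond.
apply: (@eq_upto2_trans _ _ _ (\prod_(0 <= i < L | (0 <= i < L)%N && true)
    ((geom int n i.+1)%:P * (y - (q ^+ i.+1)%:P)) *
    ((q ^+ L.+1 * geom int n L.+1)%:P * (y - 1)))).
  apply: eq_upto2M; last exact: lpart_factor_sum_eq.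
  by apply: eq_upto2_prod => i /andP[/andP[_ iL] _]; apply: lpart_factor_sum_lt.
rewrite -big_nat_cond big_mkord big_split /= -rmorph_prod.
rewrite /gterm /qfactinv /ypoch big_ord_recr big_ord_recl /= expr0 !rmorphM /=.
set A := (\prod_(i < L) _)%:P; set B := \prod_(i < L) _.
by apply: eq_upto2_eq; rewrite polyC1; ring.
Qed.

Lemma binom_gf_gsum : eq_upto2 n binom_gf (gsum int n).
Proof.
rewrite binom_gfE; apply: eq_upto2_sum => L _.
by apply/prod_lpart_factor_sum; rewrite -ltnS.
Qed.

End LargestPartSeries.

Lemma sum_by_value (R : nzRingType) (I : finType) (P : pred I) (w : I -> R)
    (v : I -> nat) K (g : nat -> R) : (forall i, P i -> (v i < K)%N) ->
  \sum_(i | P i) w i * g (v i) = \sum_(a < K) (\sum_(i | P i && (v i == a)) w i) * g a.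
Proof.
move=> vK; under [RHS]eq_bigr do rewrite big_distrl /= big_mkcondr /=.
rewrite exchange_big /=; apply: eq_bigr => i Pi.
rewrite (bigD1 (Ordinal (vK i Pi))) //= eqxx big1 ?addr0 // => a /negbTE av.
by rewrite -(inj_eq val_inj) /= in av; rewrite eq_sym av.
Qed.

Section CoefficientIdentity.
Variable n : nat.
Implicit Types m : mult n.

Definition distinct_count a : int :=
  \sum_(m : mult n | is_partition m && is_distinct m && (spart m == a))
    (-1) ^+ (nparts m).-1.

Definition binom_count a : int :=
  \sum_(m : mult n | is_partition m)
     \sum_(j < (nu_d m).+1 | (lpart m - j)%N == a) (-1) ^+ j * ('C(nu_d m, j))%:R.

Lemma distinct_countE a : (0 < a)%N -> (a <= n)%N -> distinct_count a = (qtail int n a)`_n.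
Proof.
move=> a0 an; rewrite -distinct_spart_gf // coef_sum /distinct_count.
rewrite big_mkcond [RHS]big_mkcond; apply: eq_bigr => m _.
rewrite -andbA; case: (is_distinct m && _); rewrite ?andbF ?andbT //.
have -> : (-1) ^+ (nparts m).-1 = ((-1) ^+ (nparts m).-1)%:P :> {poly int}.
  by rewrite rmorphXn rmorphN1.
rewrite coefCM coefXn eq_sym.
by rewrite /is_partition -/(psize m); case: eqP; rewrite ?mulr1 ?mulr0.
Qed.

Lemma binom_countE a : binom_count a = ((binom_gf n)`_a)`_n.
Proof.
rewrite /binom_gf !coef_sum /binom_count big_mkcond; apply: eq_bigr => m _.
rewrite coefCM /binom_weight coef_sum mulr_sumr coef_sum big_mkcond /=.
under [RHS]eq_bigr do rewrite coefCM coefXn -polyC_natr -polyCM mulrC coefCM coefXn.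
rewrite /is_partition -/(psize m) eq_sym; case: eqP => _; last first.
  by rewrite big1 // => j _; rewrite mulr0.
by apply: eq_bigr => j _; rewrite mulr1 eq_sym; case: eqP; rewrite ?mulr1 ?mulr0.
Qed.

Lemma distinct_count_binom a : (0 < a)%N -> (a <= n)%N -> distinct_count a = binom_count a.
Proof.
by move=> a0 an; rewrite distinct_countE // binom_countE (binom_gf_gsum a) // coef_gsum.
Qed.

Variables (R : nzRingType) (g : nat -> R).

Lemma distinct_sum_by_value : (0 < n)%N ->
  \sum_(m : mult n | is_partition m && is_distinct m) (-1) ^+ (nparts m).-1 * g (spart m)
  = \sum_(a < n.+1) (distinct_count a)%:~R * g a.
Proof.
move=> n0; rewrite (@sum_by_value _ _ _ _ _ n.+1) => [|m /andP[pm _]]; last first.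
  by rewrite ltnS spart_le.
apply: eq_bigr => a _; rewrite /distinct_count rmorph_sum; congr (_ * _).
by apply: eq_bigr => m _; rewrite rmorphXn rmorphN1.
Qed.

Lemma binom_sum_by_value :
  \sum_(m : mult n | is_partition m) \sum_(j < (nu_d m).+1)
     (-1) ^+ j * ('C(nu_d m, j))%:R * g (lpart m - j)%N
  = \sum_(a < n.+1) (binom_count a)%:~R * g a.
Proof.
transitivity (\sum_(m : mult n | is_partition m) \sum_(a < n.+1)
    (\sum_(j < (nu_d m).+1 | (lpart m - j)%N == a) (-1) ^+ j * ('C(nu_d m, j))%:R) * g a).
  apply: eq_bigr => m _; rewrite (@sum_by_value _ _ _ _ _ n.+1) // => j _.
  by rewrite ltnS (leq_trans (leq_subr _ _) (lpart_le m)).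
rewrite exchange_big; apply: eq_bigr => a _; rewrite -big_distrl /= /binom_count.
congr (_ * _); rewrite rmorph_sum; apply: eq_bigr => m _; rewrite rmorph_sum.
by apply: eq_bigr => j _; rewrite rmorphM rmorphXn rmorphN1 rmorph_nat.
Qed.

Lemma partition_identity : g 0%N = 0 -> (0 < n)%N ->
  \sum_(m : mult n | is_partition m && is_distinct m) (-1) ^+ (nparts m).-1 * g (spart m)
  = \sum_(m : mult n | is_partition m) \sum_(j < (nu_d m).+1)
       (-1) ^+ j * ('C(nu_d m, j))%:R * g (lpart m - j)%N.
Proof.
move=> g0 n0; rewrite distinct_sum_by_value // binom_sum_by_value.
apply: eq_bigr => -[[|a] an] _ /=; first by rewrite g0 !mulr0.
by rewrite distinct_count_binom.
Qed.

End CoefficientIdentity.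

Theorem corollary2p4 (R : realType) (k : R[i]) (n : nat) (hn : (0 < n)%N) :
  \sum_(m : mult n | is_partition m && is_distinct m)
      (-1) ^+ (nparts m).-1 * cpow_nat (spart m) k
  = \sum_(m : mult n | is_partition m)
      \sum_(j < (nu_d m).+1)
         (-1) ^+ j * ('C(nu_d m, j))%:R * cpow_nat (lpart m - j) k.
Proof. exact: (@partition_identity n _ (fun t => cpow_nat t k) erefl hn). Qed.
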